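(* Let $t \ge 1$ and let $A \subseteq \mathbb{Z}^2$ be a set of $t$ cells, where a cell $(x,y)$ denotes row $x$ (rows numbered increasing downwards) and column $y$ (columns numbered increasing rightwards). Suppose the following two conditions hold. (First flood.) There exist pairwise distinct cells $c_1,\dots,c_t$ with $A=\{c_1,\dots,c_t\}$, and integers $s_1,\dots,s_{t-1}\in\{0,1\}$ such that, setting $r_0=0$ and $r_j=r_{j-1}+s_j$, we have $r_j\in\{0,1\}$ for all $1\le j\le t-1$, and for every $1\le j\le t-1$ there is an index $\ell\le j$ with $$c_{j+1}=\begin{cases} c_\ell+(1,0) & \text{if } r_j=0 \text{ (the cell directly below } c_\ell),\\ c_\ell+(0,1) & \text{if } r_j=1 \text{ (the cell directly to the right of } c_\ell).\end{cases}$$ (Second flood.) There exist pairwise distinct cells $d_1,\dots,d_t$ with $A=\{d_1,\dots,d_t\}$, and integers $s'_1,\dots,s'_{t-1}\in\{0,1\}$ such that, setting $r'_0=0$ and $r'_j=r'_{j-1}+s'_j$, we have $r'_j\in\{0,1\}$ for all $1\le j\le t-1$, and for every $1\le j\le t-1$ there is an index $\ell\le j$ with $$d_{j+1}=\begin{cases} d_\ell+(-1,0) & \text{if } r'_j=0 \text{ (the cell directly above } d_\ell),\\ d_\ell+(0,-1) & \text{if } r'_j=1 \text{ (the cell directly to the left of } d_\ell).\end{cases}$$ Then $A$ is a rectangle: there are integers $a\le a'$ and $b\le b'$ with $A=\{a,\dots,a'\}\times\{b,\dots,b'\}$ and $(a'-a+1)(b'-b+1)=t$; moreover $c_1=(a,b)$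 is its top-left corner and $d_1=(a',b')$ is its bottom-right corner.
   Context: This is the combinatorial core of the soundness of a card-based zero-knowledge protocol for the Shikaku puzzle (partition an $m\times n$ grid into rectangles, each containing exactly one given number equal to its area). In the protocol, a prover marks a region by a ''first flood'' starting from one cell and repeatedly marking a new, previously unmarked cell adjacent to an already marked one, moving only downwards while a secret direction bit $r$ equals $0$ and only rightwards once $r=1$ (where $r$ is updated by secretly adding $s\in\{0,1\}$ and publicly checking $r\ne 2$), followed by a ''second flood'' over exactly the same set of cells starting from one cell and moving only upwards while $r=0$ and only leftwards once $r=1$. The hypotheses above formalize these two floods. *)

(* cells are pairs of integers (row, column). *)
From Stdlib Require Import ZArith Lia.
Open Scope Z_scope.

Definition cell := (Z * Z)%type.

Fixpoint racc (s : nat -> Z) (j : nat) : Z :=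
  match j with
  | O => 0
  | S k => racc s k + s (S k)
  end.

Definition cadd (p q : cell) : cell := (fst p + fst q, snd p + snd q).

Definition flood (t : nat) (A : cell -> Prop) (c : nat -> cell) (s : nat -> Z)
    (v0 v1 : cell) : Prop :=
  (forall i j, (1 <= i <= t)%nat -> (1 <= j <= t)%nat -> c i = c j -> i = j) /\
  (forall p, A p <-> exists i, (1 <= i <= t)%nat /\ c i = p) /\
  (forall j, (1 <= j <= t - 1)%nat -> s j = 0 \/ s j = 1) /\
  (forall j, (1 <= j <= t - 1)%nat -> racc s j = 0 \/ racc s j = 1) /\
  (forall j, (1 <= j <= t - 1)%nat ->
     exists l, (1 <= l <= j)%nat /\
       (racc s j = 0 -> c (S j) = cadd (c l) v0) /\
       (racc s j = 1 -> c (S j) = cadd (c l) v1)).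

(* While the direction bit is 0 the first flood only moves down, and it can
   never return to 0 once it is 1, so it first fills a column segment below
   c_1 and afterwards only moves right.  Hence every cell of A lies weakly
   below and to the right of c_1, every cell of A off the column of c_1 has
   its left neighbour in A, and every cell of that column other than c_1 has
   its upper neighbour in A.  Point reflection turns the second flood into a
   first flood, so symmetrically d_1 bounds A from below-right and every cell
   left of the column of d_1 has its right neighbour in A.  Walking from d_1
   left to the column of c_1, up that column and then right reaches every
   cell of the box spanned by c_1 and d_1, so A is that box; counting its t
   distinct cells gives its area. *)

From Stdlib Require Import ZArith Lia List Permutation.
Open Scope Z_scope.

Lemma racc_nonneg (s : nat -> Z) (j : nat) :
  (forall k, (1 <= k <= j)%nat -> 0 <= s k) -> 0 <= racc s j.
Proof.
  induction j as [|j IH]; intros Hs; simpl; [lia|].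
  specialize (IH (fun k Hk => Hs k ltac:(lia))). specialize (Hs (S j) ltac:(lia)). lia.
Qed.

Lemma racc_zero_pred (s : nat -> Z) (j : nat) :
  (forall k, (1 <= k <= S j)%nat -> 0 <= s k) -> racc s (S j) = 0 -> racc s j = 0.
Proof.
  intros Hs H0. simpl in H0.
  pose proof (racc_nonneg s j (fun k Hk => Hs k ltac:(lia))).
  specialize (Hs (S j) ltac:(lia)). lia.
Qed.

Lemma Z_walk_down (P : Z -> Prop) (lo z : Z) :
  (forall w, P w -> lo < w -> P (w - 1)) -> P z -> forall w, lo <= w <= z -> P w.
Proof.
  intros Hstep Hz w Hw.
  assert (Hk : forall k, 0 <= k -> k <= z - lo -> P (z - k)).
  { refine (natlike_ind (fun k => k <= z - lo -> P (z - k)) _ _).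
    - intros _. rewrite Z.sub_0_r. exact Hz.
    - intros k Hk IH Hle. replace (z - Z.succ k) with (z - k - 1) by lia.
      apply Hstep; [apply IH|]; lia. }
  replace w with (z - (z - w)) by lia. apply Hk; lia.
Qed.

Lemma Z_walk_up (P : Z -> Prop) (z hi : Z) :
  (forall w, P w -> w < hi -> P (w + 1)) -> P z -> forall w, z <= w <= hi -> P w.
Proof.
  intros Hstep Hz w Hw.
  rewrite <- (Z.opp_involutive w).
  apply (Z_walk_down (fun v => P (- v)) (- hi) (- z)); [| now rewrite Z.opp_involutive | lia].
  intros v Hv Hlt. replace (- (v - 1)) with (- v + 1) by lia. apply Hstep; [exact Hv | lia].
Qed.

Record staircase (P : cell -> Prop) (a b : Z) : Prop := {
  staircase_lb : forall p, P p -> a <= fst p /\ b <= snd p;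
  staircase_left : forall x y, P (x, y) -> b < y -> P (x, y - 1);
  staircase_up : forall x, P (x, b) -> a < x -> P (x - 1, b)
}.

Lemma staircase_ext (P Q : cell -> Prop) (a b : Z) :
  (forall p, P p <-> Q p) -> staircase P a b -> staircase Q a b.
Proof.
  intros HPQ [Hlb Hleft Hup]. split.
  - intros p Hp. apply Hlb, HPQ, Hp.
  - intros x y Hp Hy. apply HPQ, Hleft; [apply HPQ|]; assumption.
  - intros x Hp Hx. apply HPQ, Hup; [apply HPQ|]; assumption.
Qed.

Lemma staircase_extend (P : cell -> Prop) (a b x y : Z) :
  staircase P a b -> a <= x -> b <= y ->
  (b < y -> P (x, y - 1)) -> (y = b -> a < x -> P (x - 1, b)) ->
  staircase (fun p => P p \/ (x, y) = p) a b.
Proof.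
  intros [Hlb Hleft Hup] Hx Hy Hnew_left Hnew_up. split.
  - intros p [Hp | <-]; [apply Hlb, Hp | simpl; lia].
  - intros x' y' [Hp | E] Hy'; [left; apply Hleft; assumption|].
    injection E as <- <-. left. apply Hnew_left, Hy'.
  - intros x' [Hp | E] Hx'; [left; apply Hup; assumption|].
    injection E as <- ->. left. apply Hnew_up; auto.
Qed.

Lemma staircase_box (A : cell -> Prop) (a b a' b' : Z) :
  staircase A a b -> A (a', b') ->
  (forall p, A p -> fst p <= a' /\ snd p <= b') ->
  (forall x y, A (x, y) -> y < b' -> A (x, y + 1)) ->
  forall p, A p <-> (a <= fst p <= a' /\ b <= snd p <= b').
Proof.
  intros HA Hcorner Hub Hright [x y]. split.
  - intros Hp. pose proof (staircase_lb _ _ _ HA _ Hp). pose proof (Hub _ Hp). simpl in *. lia.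
  - simpl. intros [Hx Hy].
    pose proof (staircase_lb _ _ _ HA _ Hcorner) as Hab; simpl in Hab.
    assert (Hbottom : A (a', b)).
    { apply (Z_walk_down (fun w => A (a', w)) b b'); [|exact Hcorner|lia].
      intros w Hw Hlt. apply (staircase_left _ _ _ HA); assumption. }
    assert (Hcolumn : A (x, b)).
    { apply (Z_walk_down (fun v => A (v, b)) a a'); [|exact Hbottom|lia].
      intros v Hv Hlt. apply (staircase_up _ _ _ HA); assumption. }
    apply (Z_walk_up (fun w => A (x, w)) b b'); [|exact Hcolumn|lia].
    intros w Hw Hlt. apply Hright; assumption.
Qed.

Fixpoint first_cells (c : nat -> cell) (j : nat) (p : cell) : Prop :=
  match j with
  | O => False
  | S k => first_cells c k p \/ c (S k) = p
  end.

Lemma first_cells_iff (c : nat -> cell) (j : nat) (p : cell) :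
  first_cells c j p <-> exists i, (1 <= i <= j)%nat /\ c i = p.
Proof.
  induction j as [|j IH]; simpl.
  - split; [tauto|]. intros [i [Hi _]]. lia.
  - rewrite IH. split.
    + intros [[i [Hi E]] | E]; [exists i | exists (S j)]; split; auto; lia.
    + intros [i [Hi E]]. destruct (Nat.eq_dec i (S j)) as [-> | Hne]; [right; exact E|].
      left. exists i. split; [lia | exact E].
Qed.

Section DownRightFlood.

Variables (t : nat) (A : cell -> Prop) (c : nat -> cell) (s : nat -> Z) (a b : Z).
Hypothesis Hflood : flood t A c s (1, 0) (0, 1).
Hypothesis Hc1 : c 1%nat = (a, b).

(* Once the direction bit is 1 it stays 1, so [racc s j = 0] means that
   c_1, ..., c_(j+1) were all placed while moving down. *)
Lemma first_cells_staircase (j : nat) :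
  (j <= t - 1)%nat ->
  staircase (first_cells c (S j)) a b /\
  (racc s j = 0 -> forall p, first_cells c (S j) p -> snd p = b).
Proof.
  destruct Hflood as [_ [_ [Hbit [Hr Hstep]]]].
  induction j as [|j IH]; intros Hj.
  - change (first_cells c 1) with (fun p => False \/ c 1%nat = p). rewrite Hc1. split.
    + apply staircase_extend; try lia. split; contradiction.
    + intros _ p [[] | <-]. reflexivity.
  - destruct (IH ltac:(lia)) as [Hstair Hcol].
    destruct (Hstep (S j) ltac:(lia)) as [l [Hl [Hdown Hright]]].
    assert (Hcl : first_cells c (S j) (c l)) by (apply first_cells_iff; exists l; auto).
    pose proof (staircase_lb _ _ _ Hstair _ Hcl) as Hlb.
    change (first_cells c (S (S j))) with (fun p => first_cells c (S j) p \/ c (S (S j)) = p).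
    destruct (c l) as [x y] eqn:Ecl. simpl in Hlb.
    destruct (Hr (S j) ltac:(lia)) as [R | R].
    + assert (Rj : racc s j = 0).
      { apply (racc_zero_pred s j); [|exact R].
        intros k Hk. destruct (Hbit k ltac:(lia)); lia. }
      pose proof (Hcol Rj _ Hcl) as Hy. simpl in Hy.
      rewrite (Hdown R). unfold cadd; cbn [fst snd]. rewrite Z.add_0_r. split.
      * apply staircase_extend; try assumption; try lia.
        intros _ _. replace (x + 1 - 1) with x by lia. rewrite <- Hy. exact Hcl.
      * intros _ p [Hp | <-]; [exact (Hcol Rj p Hp) | exact Hy].
    + rewrite (Hright R). unfold cadd; cbn [fst snd]. rewrite Z.add_0_r. split.
      * apply staircase_extend; try assumption; try lia.
        intros _. replace (y + 1 - 1) with y by lia. exact Hcl.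
      * rewrite R. discriminate.
Qed.

Lemma down_right_flood_staircase : (1 <= t)%nat -> staircase A a b.
Proof.
  intros Ht. destruct (first_cells_staircase (t - 1) ltac:(lia)) as [Hstair _].
  apply (staircase_ext _ _ _ _ (fun p => iff_sym (proj1 (proj2 Hflood) p))).
  replace t with (S (t - 1)) by lia.
  apply (staircase_ext _ _ _ _ (first_cells_iff c _)), Hstair.
Qed.

End DownRightFlood.

Definition copp (p : cell) : cell := (- fst p, - snd p).

Lemma copp_involutive (p : cell) : copp (copp p) = p.
Proof. destruct p as [x y]. unfold copp. simpl. rewrite !Z.opp_involutive. reflexivity. Qed.

Lemma flood_copp (t : nat) (A : cell -> Prop) (d : nat -> cell) (s : nat -> Z) (v0 v1 : cell) :
  flood t A d s v0 v1 ->
  flood t (fun p => A (copp p)) (fun i => copp (d i)) s (copp v0) (copp v1).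
Proof.
  intros [Hinj [Hmem [Hbit [Hr Hstep]]]].
  assert (Hcadd : forall p q, copp (cadd p q) = cadd (copp p) (copp q)).
  { intros [] []. unfold copp, cadd. simpl. f_equal; lia. }
  refine (conj _ (conj _ (conj Hbit (conj Hr _)))).
  - intros i j Hi Hj E. apply Hinj; auto.
    rewrite <- (copp_involutive (d i)), <- (copp_involutive (d j)), E. reflexivity.
  - intros p. rewrite Hmem. split; intros [i [Hi Ei]]; exists i; split; auto.
    + rewrite Ei, copp_involutive. reflexivity.
    + rewrite <- Ei, copp_involutive. reflexivity.
  - intros j Hj. destruct (Hstep j Hj) as [l [Hl [H0 H1]]].
    exists l. split; [exact Hl|].
    split; intros R; [rewrite (H0 R) | rewrite (H1 R)]; apply Hcadd.
Qed.

Lemma up_left_flood_bounds (t : nat) (A : cell -> Prop) (d : nat -> cell) (s : nat -> Z)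
    (a' b' : Z) :
  (1 <= t)%nat -> flood t A d s (-1, 0) (0, -1) -> d 1%nat = (a', b') ->
  (forall p, A p -> fst p <= a' /\ snd p <= b') /\
  (forall x y, A (x, y) -> y < b' -> A (x, y + 1)).
Proof.
  intros Ht Hd Hd1.
  assert (Hd1' : copp (d 1%nat) = (- a', - b')) by (rewrite Hd1; reflexivity).
  pose proof (down_right_flood_staircase _ _ _ _ _ _ (flood_copp _ _ _ _ _ _ Hd) Hd1' Ht)
    as [Hlb Hleft _].
  split.
  - intros p Hp. rewrite <- (copp_involutive p) in Hp.
    pose proof (Hlb _ Hp) as H. unfold copp in H. simpl in H. lia.
  - intros x y Hp Hy.
    assert (H : A (copp (- x, - y - 1))).
    { apply (Hleft (- x) (- y)); [|lia].
      unfold copp. simpl. rewrite !Z.opp_involutive. exact Hp. }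
    unfold copp in H. simpl in H. rewrite Z.opp_involutive in H.
    replace (- (- y - 1)) with (y + 1) in H by lia. exact H.
Qed.

Definition zrange (a a' : Z) : list Z :=
  map (fun i => a + Z.of_nat i) (seq 0 (Z.to_nat (a' - a + 1))).

Lemma zrange_NoDup (a a' : Z) : NoDup (zrange a a').
Proof.
  apply FinFun.Injective_map_NoDup_in; [|apply seq_NoDup]. intros i j _ _ E. lia.
Qed.

Lemma in_zrange (a a' z : Z) : In z (zrange a a') <-> a <= z <= a'.
Proof.
  unfold zrange. rewrite in_map_iff. split.
  - intros [i [<- Hi]]. apply in_seq in Hi. lia.
  - intros H. exists (Z.to_nat (z - a)). split; [lia|]. apply in_seq. lia.
Qed.

Lemma NoDup_list_prod {X Y : Type} (l : list X) (l' : list Y) :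
  NoDup l -> NoDup l' -> NoDup (list_prod l l').
Proof.
  induction l as [|x l IH]; intros Hl Hl'; simpl; [constructor|].
  inversion Hl as [|? ? Hx Hl0]; subst.
  apply NoDup_app; [| apply IH; assumption |].
  - apply FinFun.Injective_map_NoDup_in; [|exact Hl']. intros y y' _ _ E. injection E. auto.
  - intros [x' y] Hin Hin'. apply in_map_iff in Hin as [? [E _]]. injection E as <- _.
    apply in_prod_iff in Hin'. tauto.
Qed.

Lemma box_area (t : nat) (c : nat -> cell) (a a' b b' : Z) :
  a <= a' -> b <= b' ->
  (forall i j, (1 <= i <= t)%nat -> (1 <= j <= t)%nat -> c i = c j -> i = j) ->
  (forall p, (exists i, (1 <= i <= t)%nat /\ c i = p) <->
             (a <= fst p <= a' /\ b <= snd p <= b')) ->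
  (a' - a + 1) * (b' - b + 1) = Z.of_nat t.
Proof.
  intros Ha Hb Hinj Himg.
  assert (Hperm : Permutation (map c (seq 1 t)) (list_prod (zrange a a') (zrange b b'))).
  { apply NoDup_Permutation.
    - apply FinFun.Injective_map_NoDup_in; [|apply seq_NoDup].
      intros i j Hi Hj. apply in_seq in Hi, Hj. apply Hinj; lia.
    - apply NoDup_list_prod; apply zrange_NoDup.
    - intros [x y]. rewrite (in_prod_iff (zrange a a') (zrange b b')), !in_zrange, in_map_iff.
      transitivity (exists i, (1 <= i <= t)%nat /\ c i = (x, y)); [|apply Himg].
      split; intros [i [H1 H2]]; exists i; rewrite in_seq in *; split; auto; lia. }
  apply Permutation_length in Hperm.
  unfold cell in Hperm. rewrite length_map, length_seq, length_prod in Hperm. unfold zrange in Hperm.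
  rewrite !length_map, !length_seq in Hperm.
  rewrite Hperm, Nat2Z.inj_mul, !Z2Nat.id by lia. reflexivity.
Qed.

Theorem mainTheorem1 (t : nat) (A : cell -> Prop)
    (c : nat -> cell) (s : nat -> Z) (d : nat -> cell) (s' : nat -> Z) :
  (1 <= t)%nat ->
  flood t A c s (1, 0) (0, 1) ->
  flood t A d s' (-1, 0) (0, -1) ->
  exists a a' b b' : Z,
    a <= a' /\ b <= b' /\
    (forall p : cell, A p <-> (a <= fst p <= a' /\ b <= snd p <= b')) /\
    (a' - a + 1) * (b' - b + 1) = Z.of_nat t /\
    c 1%nat = (a, b) /\ d 1%nat = (a', b').
Proof.
  intros Ht Hc Hd.
  destruct (c 1%nat) as [a b] eqn:Ec1.
  destruct (d 1%nat) as [a' b'] eqn:Ed1.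
  pose proof (down_right_flood_staircase _ _ _ _ _ _ Hc Ec1 Ht) as Hstair.
  destruct (up_left_flood_bounds _ _ _ _ _ _ Ht Hd Ed1) as [Hub Hright].
  assert (Hd1 : A (a', b')) by (apply (proj1 (proj2 Hd)); exists 1%nat; split; [lia | exact Ed1]).
  pose proof (staircase_box _ _ _ _ _ Hstair Hd1 Hub Hright) as Hbox.
  pose proof (staircase_lb _ _ _ Hstair _ Hd1) as Hcorner. simpl in Hcorner.
  exists a, a', b, b'.
  split; [lia|]. split; [lia|]. split; [exact Hbox|]. split; [|split; reflexivity].
  apply (box_area t c); [lia | lia | exact (proj1 Hc) |].
  intros p. rewrite <- Hbox. symmetry. exact (proj1 (proj2 Hc) p).
Qed.
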